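(* Let $\Phi:\mathbb{R}^N\to\mathbb{R}^M$ and $L:\mathbb{R}^P\to\mathbb{R}^N$ be linear operators, let $\|\cdot\|_A$ be a norm on $\mathbb{R}^P$ with dual norm $\|\cdot\|_A^*$, set $R(x)=\|L^*x\|_A$, and let $C_A>0$ be a constant with $\|u\|_A\ge C_A\|u\|_2$ for all $u\in\mathbb{R}^P$. Let $x_0\in\mathbb{R}^N$, assume $\|\cdot\|_A$ is decomposable at $u_0=L^*x_0$ with associated subspace $T_0$ and vector $e_0\in T_0$, and let $S_0=T_0^\perp$. Suppose there exist $\eta\in\mathbb{R}^M$ and $\alpha\in\partial\|\cdot\|_A(L^*x_0)$ with $\Phi^*\eta=L\alpha$ and $\|\alpha_{S_0}\|_A^*<1$. Let $y\in\mathbb{R}^M$, $\lambda>0$, and let $x^\star$ be a minimizer of $\min_{x\in\mathbb{R}^N}\tfrac12\|y-\Phi x\|_2^2+\lambda R(x)$. Then $$\|L_{S_0}^*(x^\star-x_0)\|_2\le\frac{D^A_\alpha(L^*x^\star,L^*x_0)}{C_A\,(1-\|\alpha_{S_0}\|_A^* )}.$$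
   Context: For a subspace $V\subset\mathbb{R}^P$, $P_V$ denotes the orthogonal projector onto $V$, and $L_V=LP_V$, $L_V^*=P_VL^*$, $\alpha_V=P_V\alpha$ for $\alpha\in\mathbb{R}^P$. A norm $\|\cdot\|_A$ on $\mathbb{R}^P$ is decomposable at $u\in\mathbb{R}^P$ if (i) there exist a subspace $T\subset\mathbb{R}^P$ and a vector $e\in T$ such that $\partial\|\cdot\|_A(u)=\{\alpha\in\mathbb{R}^P:\ \alpha_T=e,\ \|\alpha_{T^\perp}\|_A^*\le 1\}$, and (ii) for every $z\in T^\perp$, $\|z\|_A=\sup\{\langle v,z\rangle: v\in T^\perp,\ \|v\|_A^*\le 1\}$. For $\alpha\in\partial\|\cdot\|_A(u_0)$, the Bregman distance is $D^A_\alpha(u,u_0)=\|u\|_A-\|u_0\|_A-\langle\alpha,u-u_0\rangle$. *)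

From HB Require Import structures.
From mathcomp Require Import all_boot all_order all_algebra.
From mathcomp Require Import all_classical all_reals.
Set Implicit Arguments. Unset Strict Implicit. Unset Printing Implicit Defensive.
Import Order.TTheory GRing.Theory Num.Theory.
Local Open Scope ring_scope.
Local Open Scope classical_set_scope.

(* Vectors of R^n are column vectors 'cV[R]_n; linear operators are matrices,
   the adjoint is the transpose. *)

Definition vdot (R : realType) (n : nat) (u v : 'cV[R]_n) : R :=
  \sum_(i < n) u i 0 * v i 0.

Definition norm2 (R : realType) (n : nat) (u : 'cV[R]_n) : R :=
  Num.sqrt (vdot u u).

Definition is_norm (R : realType) (n : nat) (nA : 'cV[R]_n -> R) : Prop :=
  [/\ forall u, 0 <= nA u,
      forall u, nA u = 0 -> u = 0,
      forall (a : R) u, nA (a *: u) = `|a| * nA u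
    & forall u v, nA (u + v) <= nA u + nA v].

Definition dual_norm (R : realType) (n : nat) (nA : 'cV[R]_n -> R)
  (v : 'cV[R]_n) : R :=
  sup [set vdot v u | u in [set u | nA u <= 1]].

Definition subdiff (R : realType) (n : nat) (nA : 'cV[R]_n -> R)
  (u alpha : 'cV[R]_n) : Prop :=
  forall w, nA u + vdot alpha (w - u) <= nA w.

(* A subspace T of R^n is represented by its orthogonal projector PT
   (a symmetric idempotent matrix); P_{T^perp} = 1 - PT. *)
Definition orth_proj (R : realType) (n : nat) (PT : 'M[R]_n) : Prop :=
  PT^T = PT /\ PT *m PT = PT.

Definition decomposable_at (R : realType) (n : nat) (nA : 'cV[R]_n -> R)
  (u : 'cV[R]_n) (PT : 'M[R]_n) (e : 'cV[R]_n) : Prop :=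
  [/\ orth_proj PT,
      PT *m e = e,
      (forall alpha, subdiff nA u alpha <->
          (PT *m alpha = e /\ dual_norm nA ((1%:M - PT) *m alpha) <= 1))
    & (forall z, (1%:M - PT) *m z = z ->
          nA z = sup [set vdot v z | v in
                       [set v | (1%:M - PT) *m v = v /\ dual_norm nA v <= 1]])].

Definition bregman (R : realType) (n : nat) (nA : 'cV[R]_n -> R)
  (alpha u u0 : 'cV[R]_n) : R :=
  nA u - nA u0 - vdot alpha (u - u0).

Definition objective (R : realType) (m n p : nat) (Phi : 'M[R]_(m, n))
  (L : 'M[R]_(n, p)) (nA : 'cV[R]_p -> R) (y : 'cV[R]_m) (lambda : R)
  (x : 'cV[R]_n) : R :=
  2^-1 * (norm2 (y - Phi *m x)) ^+ 2 + lambda * nA (L^T *m x).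

(* For v in S0 = T0^perp with dual norm at most 1, e0 + v is again a
   subgradient of the norm at u0, so <v, z> - <alpha_S0, z> <= D for
   z = P_S0 (u - u0) and D the Bregman distance between u and u0.  Taking the
   supremum over v, part (ii) of decomposability turns this into
   ||z||_A <= D + <alpha_S0, z> <= D + d ||z||_A with d the dual norm of
   alpha_S0, and ||z||_A >= C_A ||z||_2 finishes. *)
From HB Require Import structures.
From mathcomp Require Import all_boot all_order all_algebra.
From mathcomp Require Import all_classical all_reals.
From mathcomp Require Import lra.
Import Order.TTheory GRing.Theory Num.Theory.
Local Open Scope ring_scope.
Local Open Scope classical_set_scope.

Section InnerProduct.
Context {R : realType} {p : nat}.
Implicit Types (u v w : 'cV[R]_p) (A : 'M[R]_p).

Lemma vdotC u v : vdot u v = vdot v u.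
Proof. by apply: eq_bigr => i _; rewrite mulrC. Qed.

Lemma vdotDl u v w : vdot (u + v) w = vdot u w + vdot v w.
Proof. by rewrite /vdot -big_split; apply: eq_bigr => i _; rewrite mxE mulrDl. Qed.

Lemma vdotBl u v w : vdot (u - v) w = vdot u w - vdot v w.
Proof.
rewrite vdotDl /vdot -sumrN; congr (_ + _).
by apply: eq_bigr => i _; rewrite mxE mulNr.
Qed.

Lemma vdotZr (c : R) u w : vdot u (c *: w) = c * vdot u w.
Proof. by rewrite /vdot mulr_sumr; apply: eq_bigr => i _; rewrite mxE mulrCA. Qed.

Lemma vdot0r u : vdot u 0 = 0.
Proof. by rewrite /vdot big1 // => i _; rewrite mxE mulr0. Qed.

Lemma vdot0l u : vdot 0 u = 0.
Proof. by rewrite vdotC vdot0r. Qed.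

Lemma vdot_mulmxl A u v : vdot (A *m u) v = vdot u (A^T *m v).
Proof.
have vdotE a b : vdot a b = (a^T *m b) 0 0.
  by rewrite mxE; apply: eq_bigr => i _; rewrite mxE.
by rewrite !vdotE trmx_mul mulmxA.
Qed.

Lemma abs_coord_le_norm2 u i : `|u i 0| <= norm2 u.
Proof.
rewrite /norm2 -sqrtr_sqr; apply: ler_wsqrtr.
rewrite /vdot (bigD1 i) //= expr2 lerDl.
by apply: sumr_ge0 => j _; rewrite -expr2 sqr_ge0.
Qed.

Lemma vdot_le_l1_norm2 u v : vdot u v <= (\sum_(i < p) `|u i 0|) * norm2 v.
Proof.
rewrite /vdot mulr_suml; apply: ler_sum => i _.
apply: le_trans (ler_norm _) _; rewrite normrM.
exact: ler_wpM2l (abs_coord_le_norm2 v i).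
Qed.

End InnerProduct.

Section DualNorm.
Context {R : realType} {p : nat} {nA : 'cV[R]_p -> R}.
Hypothesis nA_norm : is_norm nA.

Lemma norm0 : nA 0 = 0.
Proof.
case: nA_norm => _ _ nAZ _.
by rewrite -(scale0r (0 : 'cV[R]_p)) nAZ normr0 mul0r.
Qed.

Lemma dual_norm0_le1 : dual_norm nA 0 <= 1.
Proof.
apply: ge_sup; first by exists 0, 0; rewrite /= ?norm0 ?vdot0l.
by move=> _ [u _ <-]; rewrite vdot0l.
Qed.

Context {CA : R}.
Hypothesis CA_gt0 : 0 < CA.
Hypothesis norm2_le : forall u, CA * norm2 u <= nA u.

Lemma dual_norm_has_ubound v : has_ubound [set vdot v u | u in [set u | nA u <= 1]].
Proof.
exists ((\sum_(i < p) `|v i 0|) / CA) => _ [u /= nAu_le1 <-].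
apply: le_trans (vdot_le_l1_norm2 v u) _.
rewrite ler_pdivlMr // -mulrA.
have l1_ge0 : 0 <= \sum_(i < p) `|v i 0| by apply: sumr_ge0.
apply: le_trans (ler_wpM2l l1_ge0 (_ : _ <= 1)) _; last by rewrite mulr1.
by rewrite mulrC (le_trans (norm2_le u)).
Qed.

Lemma vdot_le_dual_norm v u : vdot v u <= dual_norm nA v * nA u.
Proof.
case: nA_norm => nA_ge0 nA_eq0 nAZ _.
have [/nA_eq0 ->|nAu_neq0] := eqVneq (nA u) 0; first by rewrite vdot0r norm0 mulr0.
have nAu_gt0 : 0 < nA u by rewrite lt0r nAu_neq0 nA_ge0.
have unit_u : nA ((nA u)^-1 *: u) <= 1.
  by rewrite nAZ ger0_norm ?invr_ge0 ?nA_ge0 // mulVf.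
have in_set : [set vdot v w | w in [set w | nA w <= 1]] (vdot v ((nA u)^-1 *: u)).
  by exists ((nA u)^-1 *: u).
have := ub_le_sup (dual_norm_has_ubound v) in_set.
by rewrite /dual_norm vdotZr mulrC ler_pdivrMr.
Qed.

End DualNorm.

Section Decomposable.
Context {R : realType} {p : nat} {nA : 'cV[R]_p -> R}.
Context {u0 e : 'cV[R]_p} {PT : 'M[R]_p}.
Hypothesis nA_norm : is_norm nA.
Hypothesis nA_decomposable : decomposable_at nA u0 PT e.

Local Notation PS := (1%:M - PT).

Lemma proj_complT : PS^T = PS.
Proof. by case: nA_decomposable => -[PT_sym _] _ _ _; rewrite linearB /= trmx1 PT_sym. Qed.

Lemma proj_complK : PS *m PS = PS.
Proof.
case: nA_decomposable => -[_ PT_idem] _ _ _.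
by rewrite mulmxBl mul1mx mulmxBr mulmx1 PT_idem subrr subr0.
Qed.

Lemma proj_mul_compl : PT *m PS = 0.
Proof.
by case: nA_decomposable => -[_ PT_idem] _ _ _; rewrite mulmxBr mulmx1 PT_idem subrr.
Qed.

Lemma subdiff_shift_compl v : PS *m v = v -> dual_norm nA v <= 1 ->
  subdiff nA u0 (e + v).
Proof.
case: nA_decomposable => _ PTe subdiffE _ PSv dual_v.
apply/subdiffE; split; first by rewrite mulmxDr PTe -PSv mulmxA proj_mul_compl mul0mx addr0.
by rewrite mulmxDr PSv mulmxBl mul1mx PTe subrr add0r.
Qed.

Context {alpha : 'cV[R]_p}.
Hypothesis alpha_subdiff : subdiff nA u0 alpha.

Lemma vdot_compl_le_bregman u v : PS *m v = v -> dual_norm nA v <= 1 ->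
  vdot v (PS *m (u - u0)) - vdot (PS *m alpha) (PS *m (u - u0))
    <= bregman nA alpha u u0.
Proof.
move=> PSv dual_v.
case: nA_decomposable => _ _ subdiffE _.
have [PTalpha _] := (subdiffE alpha).1 alpha_subdiff.
have vdot_PS w' w : vdot (PS *m w') (PS *m w) = vdot (PS *m w') w.
  by rewrite !vdot_mulmxl proj_complT mulmxA proj_complK.
rewrite -{1}PSv !vdot_PS PSv mulmxBl mul1mx PTalpha.
have := subdiff_shift_compl _ PSv dual_v u.
rewrite /bregman vdotDl vdotBl; lra.
Qed.

Lemma norm_compl_le_bregman u :
  nA (PS *m (u - u0))
    <= bregman nA alpha u u0 + vdot (PS *m alpha) (PS *m (u - u0)).
Proof.
case: nA_decomposable => _ _ _ normS.
have PSz : PS *m (PS *m (u - u0)) = PS *m (u - u0) by rewrite mulmxA proj_complK.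
rewrite (normS _ PSz); apply: ge_sup.
  exists (vdot 0 (PS *m (u - u0))), 0 => //; split; first by rewrite mulmx0.
  exact: dual_norm0_le1 nA_norm.
move=> _ [v [PSv dual_v] <-].
by have := vdot_compl_le_bregman u _ PSv dual_v; lra.
Qed.

Lemma norm2_compl_le_bregman (CA : R) u :
  0 < CA -> (forall w, CA * norm2 w <= nA w) ->
  dual_norm nA (PS *m alpha) < 1 ->
  norm2 (PS *m (u - u0))
    <= bregman nA alpha u u0 / (CA * (1 - dual_norm nA (PS *m alpha))).
Proof.
move=> CA_gt0 norm2_le dual_alpha_lt1.
set z := PS *m (u - u0); set d := dual_norm nA (PS *m alpha).
have one_sub_d_gt0 : 0 < 1 - d by rewrite subr_gt0.
have normA_z : nA z <= bregman nA alpha u u0 + d * nA z.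
  apply: le_trans (norm_compl_le_bregman u) _; rewrite lerD2l.
  exact: (vdot_le_dual_norm nA_norm CA_gt0 norm2_le (PS *m alpha) z).
have [nA_ge0 _ _ _] := nA_norm.
have := ler_wpM2l (ltW one_sub_d_gt0) (norm2_le z).
have := nA_ge0 z.
rewrite ler_pdivlMr ?mulr_gt0 //; nra.
Qed.

End Decomposable.

Theorem lemma2 (R : realType) (m n p : nat)
  (Phi : 'M[R]_(m, n)) (L : 'M[R]_(n, p)) (nA : 'cV[R]_p -> R) (CA : R)
  (x0 : 'cV[R]_n) (PT0 : 'M[R]_p) (e0 : 'cV[R]_p)
  (eta : 'cV[R]_m) (alpha : 'cV[R]_p)
  (y : 'cV[R]_m) (lambda : R) (xstar : 'cV[R]_n) :
  is_norm nA ->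
  0 < CA ->
  (forall u, CA * norm2 u <= nA u) ->
  decomposable_at nA (L^T *m x0) PT0 e0 ->
  subdiff nA (L^T *m x0) alpha ->
  Phi^T *m eta = L *m alpha ->
  dual_norm nA ((1%:M - PT0) *m alpha) < 1 ->
  0 < lambda ->
  (forall x, objective Phi L nA y lambda xstar <= objective Phi L nA y lambda x) ->
  norm2 ((1%:M - PT0) *m (L^T *m (xstar - x0)))
    <= bregman nA alpha (L^T *m xstar) (L^T *m x0)
       / (CA * (1 - dual_norm nA ((1%:M - PT0) *m alpha))).
Proof.
move=> nA_norm CA_gt0 norm2_le nA_decomposable alpha_subdiff _ dual_alpha_lt1 _ _.
rewrite mulmxBr.
exact: (norm2_compl_le_bregman nA_norm nA_decomposable alpha_subdiff _ _
  CA_gt0 norm2_le dual_alpha_lt1).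
Qed.
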